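(* Under the hypotheses of Theorem 3 (with $F_1,F_2$ defined from the given code and from $\beta_1,\beta_2,\lambda_1,\lambda_2,\nu_1$ satisfying $\Sigma_1\le1$, $\Sigma_2\le1$ everywhere), for all $\gamma_1,\gamma_2>0$, $$\epsilon_1\ge\mathbb P[F_1\ge\log M_1+\gamma_1]-e^{-\gamma_1},\qquad \epsilon_2\ge\mathbb P[F_2\ge\log M_2+\gamma_2]-e^{-\gamma_2}.$$
   Context: Setting: $X$ with law $P_X$ on $\mathcal X$; measurable distortion measures $\mathsf d_1\colon\mathcal X\times\mathcal Y_1\to[0,\infty)$, $\mathsf d_2\colon\mathcal X\times\mathcal Y_2\to[0,\infty)$ (all $\sigma$-algebras containing singletons). For measurable $\beta_1\colon\mathcal X\to(0,\infty)$, $\beta_2\colon\mathcal X\times\mathcal Y_1\to(0,\infty)$ and $\lambda_1,\lambda_2,\nu_1\ge0$, $\Sigma_2(y_1,y_2)=\mathbb E\big[\exp(-\frac{\lambda_1}{1+\nu_1}\mathsf d_1(X,y_1)-\lambda_2\mathsf d_2(X,y_2))/(\beta_1(X)\beta_2(X|y_1)^{\nu_1/(1+\nu_1)})\big]$ and $\Sigma_1(y_1)=\mathbb E\big[\exp(-\frac{\lambda_1}{1+\nu_1}\mathsf d_1(X,y_1))\beta_2(X|y_1)^{1/(1+\nu_1)}/\beta_1(X)\big]$. An $(M_1,M_2,d_1,d_2,\epsilon_1,\epsilon_2)$ code: possibly randomized encoders $P_{W_1|X}$ into $\{1,\dots,M_1\}$, $P_{W_2|XW_1}$ into $\{1,\dots,\lfloor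 M_2/M_1\rfloor\}$ and decoders $P_{Y_1|W_1}$, $P_{Y_2|W_1W_2}$, with $\mathcal A_1=\{\mathsf d_1(X,Y_1)\le d_1\}$, $\mathcal A_2=\mathcal A_1\cap\{\mathsf d_2(X,Y_2)\le d_2\}$, $\mathbb P[\mathcal A_1^c]\le\epsilon_1$, $\mathbb P[\mathcal A_2^c]\le\epsilon_2$. $F_1=\log\frac{\beta_2(X|Y_1)^{1/(1+\nu_1)}}{\beta_1(X)}-\frac{\lambda_1}{1+\nu_1}d_1$, $F_2=\log\frac{\beta_2(X|Y_1)^{-\nu_1/(1+\nu_1)}}{\beta_1(X)}-\frac{\lambda_1}{1+\nu_1}d_1-\lambda_2d_2$. *)

From HB Require Import structures.
From mathcomp Require Import all_boot all_order all_algebra.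
From mathcomp Require Import all_classical all_reals all_analysis.
Set Implicit Arguments. Unset Strict Implicit. Unset Printing Implicit Defensive.
Import Order.TTheory GRing.Theory Num.Theory.
Local Open Scope classical_set_scope.
Local Open Scope ring_scope.

(* Joint law of (X, Y1, Y2) induced by a successive-refinement code:
   P_X P_{W1|X} P_{W2|X W1} P_{Y1|W1} P_{Y2|W1 W2}, where
   f1 w1 x = P_{W1|X}(w1|x), f2 w1 w2 x = P_{W2|X W1}(w2|x,w1),
   g1 w1 = P_{Y1|W1=w1}, g2 w1 w2 = P_{Y2|W1=w1,W2=w2}. *)
Definition joint_prob (R : realType) (d dy1 dy2 : measure_display)
  (TX : measurableType d) (TY1 : measurableType dy1) (TY2 : measurableType dy2)
  (PX : probability TX R) (M1 K : nat)
  (f1 : 'I_M1 -> TX -> R) (f2 : 'I_M1 -> 'I_K -> TX -> R)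
  (g1 : 'I_M1 -> probability TY1 R) (g2 : 'I_M1 -> 'I_K -> probability TY2 R)
  (A : set (TX * TY1 * TY2)) : \bar R :=
  (\int[PX]_x \sum_(w1 < M1) \sum_(w2 < K)
     ((f1 w1 x * f2 w1 w2 x)%:E *
      \int[g1 w1]_y1 \int[g2 w1 w2]_y2 (\1_A (x, y1, y2))%:E))%E.

Definition Sigma1 (R : realType) (d dy1 : measure_display)
  (TX : measurableType d) (TY1 : measurableType dy1) (PX : probability TX R)
  (ds1 : TX * TY1 -> R) (beta1 : TX -> R) (beta2 : TX * TY1 -> R)
  (lam1 nu1 : R) (y1 : TY1) : \bar R :=
  (\int[PX]_x (expR (- (lam1 / (1 + nu1)) * ds1 (x, y1))
               * beta2 (x, y1) `^ (1 / (1 + nu1)) / beta1 x)%:E)%E.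

Definition Sigma2 (R : realType) (d dy1 dy2 : measure_display)
  (TX : measurableType d) (TY1 : measurableType dy1) (TY2 : measurableType dy2)
  (PX : probability TX R)
  (ds1 : TX * TY1 -> R) (ds2 : TX * TY2 -> R) (beta1 : TX -> R) (beta2 : TX * TY1 -> R)
  (lam1 lam2 nu1 : R) (y1 : TY1) (y2 : TY2) : \bar R :=
  (\int[PX]_x (expR (- (lam1 / (1 + nu1)) * ds1 (x, y1) - lam2 * ds2 (x, y2))
               / (beta1 x * beta2 (x, y1) `^ (nu1 / (1 + nu1))))%:E)%E.

Definition F1 (R : realType) (TX TY1 : Type) (beta1 : TX -> R) (beta2 : TX * TY1 -> R)
  (lam1 nu1 dd1 : R) (x : TX) (y1 : TY1) : R :=
  ln (beta2 (x, y1) `^ (1 / (1 + nu1)) / beta1 x) - lam1 / (1 + nu1) * dd1.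

Definition F2 (R : realType) (TX TY1 : Type) (beta1 : TX -> R) (beta2 : TX * TY1 -> R)
  (lam1 lam2 nu1 dd1 dd2 : R) (x : TX) (y1 : TY1) : R :=
  ln (beta2 (x, y1) `^ (- (nu1 / (1 + nu1))) / beta1 x)
  - lam1 / (1 + nu1) * dd1 - lam2 * dd2.

From HB Require Import structures.
From mathcomp Require Import all_boot all_order all_algebra.
From mathcomp Require Import all_classical all_reals all_analysis.
From mathcomp Require Import measurable_realfun lra.
Import Order.TTheory GRing.Theory Num.Theory.
Local Open Scope classical_set_scope.
Local Open Scope ring_scope.
Set Implicit Arguments. Unset Strict Implicit. Unset Printing Implicit Defensive.

(* Change of measure.  The exponent of the integrand of [Sigma1] (resp. [Sigma2])
   is an information density [info1] (resp. [info2]); it differs from [F1] (resp.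
   [F2]) only in that the actual distortion replaces the threshold, so it dominates
   [F] outside the excess-distortion event.  With t = log M + gamma this gives,
   pointwise, 1{F >= t} <= 1{excess distortion} + exp (info - t).  The law of
   (X, Y1, Y2) is a mixture, with weights at most one, of P_X times a decoder law
   over M1 (resp. M1 * (M2 / M1) <= M2) codeword indices, and Sigma <= 1 bounds
   the P_X-integral of exp info at every fixed reconstruction; hence
   E [exp (info - t)] <= M exp (-t) = exp (-gamma). *)

Lemma sum1_ord_gt0 (R : nzRingType) n (F : 'I_n -> R) :
  \sum_(i < n) F i = 1 -> (0 < n)%N.
Proof. by case: n F => // F; rewrite big_ord0 => /eqP; rewrite eq_sym oner_eq0. Qed.

Lemma le1_of_sum1 (R : numDomainType) (I : finType) (F : I -> R) i :
  (forall j, 0 <= F j) -> \sum_j F j = 1 -> F i <= 1.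
Proof. by move=> F0 <-; rewrite (bigD1 i) //= lerDl sumr_ge0. Qed.

Lemma card_mul_expR_le (R : realType) (N M : nat) (g : R) :
  (0 < M)%N -> (N <= M)%N -> N%:R * expR (- (ln M%:R + g)) <= expR (- g).
Proof.
move=> M_gt0 NM; rewrite opprD expRD [expR (- ln _)]expRN lnK ?posrE ?ltr0n //.
rewrite mulrA -[leRHS]mul1r ler_wpM2r ?expR_ge0 // -/(_ / _) ler_pdivrMr ?ltr0n //.
by rewrite mul1r ler_nat.
Qed.

Lemma indic_le_indic_add_expR (R : realType) T (A B : set T) (g : T -> R) t p :
  (B p -> ~ A p -> t <= g p) -> \1_B p <= \1_A p + expR (g p - t).
Proof.
move=> hBA; rewrite !indicE.
have [Bp|nBp] := pselect (B p); last by rewrite memNset // addr_ge0 ?ler0n ?expR_ge0.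
have [Ap|nAp] := pselect (A p); first by rewrite !mem_set // lerDl expR_ge0.
by rewrite mem_set // memNset // add0r -expR0 ler_expR subr_ge0 hBA.
Qed.

Lemma probability_nonempty (R : realType) d (T : measurableType d)
  (P : probability T R) : [set: T] !=set0.
Proof.
apply/set0P/eqP => T0.
have := probability_setT P; rewrite T0 measure0 => -[] /eqP.
by rewrite eq_sym oner_eq0.
Qed.

Lemma measurable_nle (R : realType) d (T : measurableType d) (g : T -> R) c :
  measurable_fun setT g -> measurable [set p | ~ (g p <= c)].
Proof.
move=> mg; rewrite (_ : [set p | ~ (g p <= c)] = g @^-1` `]c, +oo[).
  by rewrite -[X in measurable X]setTI; apply: mg => //; exact: measurable_itv.
by apply/seteqP; split => p /=; rewrite in_itv /= andbT ltNge => /negP.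
Qed.

Local Open Scope ereal_scope.

Lemma ge0_le_integralT (R : realType) d (T : measurableType d)
  (mu : {measure set T -> \bar R}) (f g : T -> \bar R) :
  (forall x, 0 <= f x) -> (forall x, f x <= g x) ->
  \int[mu]_x f x <= \int[mu]_x g x.
Proof.
move=> f0 fg; have g0 x : 0 <= g x by exact: le_trans (f0 x) (fg x).
rewrite (ge0_integralTE mu f0) (ge0_integralTE mu g0).
apply: ereal_sup_le => _ [h hf <-]; exists h => //= x.
exact: le_trans (hf x) (fg x).
Qed.

Lemma integral_cst_probability (R : realType) d (T : measurableType d)
  (P : probability T R) (r : \bar R) : \int[P]_x r = r.
Proof. by rewrite integral_cst //= probability_setT mule1. Qed.

Lemma integral_expRB (R : realType) d (T : measurableType d)
  (mu : {measure set T -> \bar R}) (f : T -> R) (t : R) :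
  measurable_fun setT f ->
  \int[mu]_x (expR (f x - t))%:E = (expR (- t))%:E * \int[mu]_x (expR (f x))%:E.
Proof.
move=> mf; rewrite (eq_integral (fun x => (expR (- t))%:E * (expR (f x))%:E));
  last by move=> x _; rewrite expRD mulrC EFinM.
rewrite ge0_integralZl_EFin //.
exact/measurable_EFinP/measurableT_comp.
Qed.

Lemma ge0_iterated_integral_le (R : realType) d dy (TX : measurableType d)
  (TY : measurableType dy) (P : probability TX R) (Q : probability TY R)
  (e : TX * TY -> \bar R) (b : \bar R) :
  measurable_fun setT e -> (forall p, 0 <= e p) ->
  (forall y, \int[P]_x e (x, y) <= b) -> \int[P]_x \int[Q]_y e (x, y) <= b.
Proof.
move=> me e0 hb; rewrite (fubini_tonelli _ me e0).
rewrite -[leRHS](integral_cst_probability Q).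
by apply: ge0_le_integralT => // y; exact: integral_ge0.
Qed.

Section joint_expectation.
Context (R : realType) (d dy1 dy2 : measure_display)
  (TX : measurableType d) (TY1 : measurableType dy1) (TY2 : measurableType dy2)
  (PX : probability TX R) (M1 K : nat)
  (f1 : 'I_M1 -> TX -> R) (f2 : 'I_M1 -> 'I_K -> TX -> R)
  (g1 : 'I_M1 -> probability TY1 R) (g2 : 'I_M1 -> 'I_K -> probability TY2 R).
Hypotheses (hf1m : forall w1, measurable_fun setT (f1 w1))
  (hf1 : forall w1 x, (0 <= f1 w1 x)%R)
  (hf1s : forall x, (\sum_(w1 < M1) f1 w1 x)%R = 1%R)
  (hf2m : forall w1 w2, measurable_fun setT (f2 w1 w2))
  (hf2 : forall w1 w2 x, (0 <= f2 w1 w2 x)%R)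
  (hf2s : forall w1 x, (\sum_(w2 < K) f2 w1 w2 x)%R = 1%R).

Definition joint_expect (h : TX * TY1 * TY2 -> R) : \bar R :=
  \int[PX]_x \sum_(w1 < M1) \sum_(w2 < K)
     ((f1 w1 x * f2 w1 w2 x)%:E *
      \int[g1 w1]_y1 \int[g2 w1 w2]_y2 (h (x, y1, y2))%:E).

Lemma joint_probE A : joint_prob PX f1 f2 g1 g2 A = joint_expect \1_A.
Proof. by []. Qed.

Section nonnegative_integrand.
Variable h : TX * TY1 * TY2 -> R.
Hypotheses (mh : measurable_fun setT h) (h0 : forall p, (0 <= h p)%R).

Lemma measurable_decoder_integral1 x w1 w2 :
  measurable_fun setT (fun y1 => \int[g2 w1 w2]_y2 (h (x, y1, y2))%:E).
Proof.
have mh2 : measurable_fun setT (fun p : TX * TY1 => \int[g2 w1 w2]_y2 (h (p, y2))%:E).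
  by apply: (measurable_fun_fubini_tonelli_F (fun p => (h p)%:E)) => [|p];
    [exact/measurable_EFinP | rewrite lee_fin].
exact: (measurable_fun_pair2 x mh2).
Qed.

Lemma measurable_decoder_integral w1 w2 :
  measurable_fun setT (fun x => \int[g1 w1]_y1 \int[g2 w1 w2]_y2 (h (x, y1, y2))%:E).
Proof.
apply: (measurable_fun_fubini_tonelli_F
  (fun p : TX * TY1 => \int[g2 w1 w2]_y2 (h (p, y2))%:E)); last first.
  by move=> p; apply: integral_ge0 => y2 _; rewrite lee_fin.
by apply: (measurable_fun_fubini_tonelli_F (fun p => (h p)%:E)) => [|p];
  [exact/measurable_EFinP | rewrite lee_fin].
Qed.

Lemma decoder_integral_ge0 x w1 w2 :
  0 <= \int[g1 w1]_y1 \int[g2 w1 w2]_y2 (h (x, y1, y2))%:E.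
Proof. by apply: integral_ge0 => y1 _; apply: integral_ge0 => y2 _; rewrite lee_fin. Qed.

Lemma joint_integrand_ge0 x :
  0 <= \sum_(w1 < M1) \sum_(w2 < K) ((f1 w1 x * f2 w1 w2 x)%:E *
         \int[g1 w1]_y1 \int[g2 w1 w2]_y2 (h (x, y1, y2))%:E).
Proof.
apply: sume_ge0 => w1 _; apply: sume_ge0 => w2 _.
by rewrite mule_ge0 ?decoder_integral_ge0 // lee_fin mulr_ge0.
Qed.

Lemma measurable_joint_integrand :
  measurable_fun setT (fun x => \sum_(w1 < M1) \sum_(w2 < K)
    ((f1 w1 x * f2 w1 w2 x)%:E * \int[g1 w1]_y1 \int[g2 w1 w2]_y2 (h (x, y1, y2))%:E)).
Proof.
apply: emeasurable_sum => w1; apply: emeasurable_sum => w2.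
apply: emeasurable_funM; last exact: measurable_decoder_integral.
exact/measurable_EFinP/measurable_funM.
Qed.

End nonnegative_integrand.

Lemma joint_expect_le (h1 h2 : TX * TY1 * TY2 -> R) :
  (forall p, (0 <= h1 p)%R) -> (forall p, (h1 p <= h2 p)%R) ->
  joint_expect h1 <= joint_expect h2.
Proof.
move=> h10 h12; apply: ge0_le_integralT => [x|x]; first exact: (joint_integrand_ge0 h10).
apply: lee_sum => w1 _; apply: lee_sum => w2 _.
rewrite lee_wpmul2l ?lee_fin ?mulr_ge0 //.
apply: ge0_le_integralT => y1; first by apply: integral_ge0 => y2 _; rewrite lee_fin.
by apply: ge0_le_integralT => y2; rewrite lee_fin.
Qed.

Lemma joint_expectD (h1 h2 : TX * TY1 * TY2 -> R) :
  measurable_fun setT h1 -> (forall p, (0 <= h1 p)%R) ->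
  measurable_fun setT h2 -> (forall p, (0 <= h2 p)%R) ->
  joint_expect (h1 \+ h2)%R = joint_expect h1 + joint_expect h2.
Proof.
move=> mh1 h10 mh2 h20.
rewrite /joint_expect -ge0_integralD //; last 4 first.
- by move=> x _; exact: (joint_integrand_ge0 h10).
- exact: (measurable_joint_integrand mh1 h10).
- by move=> x _; exact: (joint_integrand_ge0 h20).
- exact: (measurable_joint_integrand mh2 h20).
apply: eq_integral => x _; rewrite -big_split; apply: eq_bigr => w1 _.
rewrite -big_split; apply: eq_bigr => w2 _ /=.
rewrite -ge0_muleDr ?(decoder_integral_ge0 h10) ?(decoder_integral_ge0 h20) //.
congr (_ * _).
rewrite -ge0_integralD //; last 4 first.
- by move=> y1 _; apply: integral_ge0 => y2 _; rewrite lee_fin.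
- exact: (measurable_decoder_integral1 mh1 h10).
- by move=> y1 _; apply: integral_ge0 => y2 _; rewrite lee_fin.
- exact: (measurable_decoder_integral1 mh2 h20).
apply: eq_integral => y1 _; rewrite -ge0_integralD //; last 4 first.
- by move=> y2 _; rewrite lee_fin.
- exact/measurable_EFinP/(measurable_fun_pair2 (x, y1)).
- by move=> y2 _; rewrite lee_fin.
- exact/measurable_EFinP/(measurable_fun_pair2 (x, y1)).
Qed.

Lemma joint_expect_fst_le (e : TX * TY1 -> R) (b : R) :
  measurable_fun setT e -> (forall q, (0 <= e q)%R) ->
  (forall y1, \int[PX]_x (e (x, y1))%:E <= b%:E) ->
  joint_expect (fun p => e p.1) <= (M1%:R * b)%:E.
Proof.
move=> me e0 hb.
have G0 w1 x : 0 <= \int[g1 w1]_y1 (e (x, y1))%:E.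
  by apply: integral_ge0 => y1 _; rewrite lee_fin.
have mG w1 : measurable_fun setT (fun x => \int[g1 w1]_y1 (e (x, y1))%:E).
  by apply: (measurable_fun_fubini_tonelli_F (fun q => (e q)%:E)) => [|q];
    [exact/measurable_EFinP | rewrite lee_fin].
(* [Y2] is integrated out and the second encoder summed out: both are probability kernels. *)
have marginal x w1 : \sum_(w2 < K) ((f1 w1 x * f2 w1 w2 x)%:E *
    \int[g1 w1]_y1 \int[g2 w1 w2]_y2 (e (x, y1, y2).1)%:E) =
    (f1 w1 x)%:E * \int[g1 w1]_y1 (e (x, y1))%:E.
  transitivity (\sum_(w2 < K) ((f1 w1 x * f2 w1 w2 x)%:E * \int[g1 w1]_y1 (e (x, y1))%:E)).
    apply: eq_bigr => w2 _; congr (_ * _).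
    apply: eq_integral => y1 _.
    exact: (integral_cst_probability (g2 w1 w2) (e (x, y1))%:E).
  rewrite -ge0_sume_distrl; last by move=> w2 _; rewrite lee_fin mulr_ge0.
  by rewrite sumEFin -mulr_sumr hf2s mulr1.
apply: (@le_trans _ _ (\int[PX]_x \sum_(w1 < M1) \int[g1 w1]_y1 (e (x, y1))%:E)).
  apply: ge0_le_integralT => x; first exact: (joint_integrand_ge0 (fun p => e0 p.1)).
  apply: lee_sum => w1 _; rewrite marginal -[leRHS]mul1e.
  by rewrite lee_wpmul2r // lee_fin (le1_of_sum1 _ (hf1 ^~ x)).
rewrite ge0_integral_sum //.
apply: (@le_trans _ _ (\sum_(w1 < M1) b%:E)); last first.
  by rewrite sumEFin sumr_const card_ord mulr_natl.
apply: lee_sum => w1 _.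
apply: (@ge0_iterated_integral_le _ _ _ _ _ PX (g1 w1) (fun q => (e q)%:E)) => //.
exact/measurable_EFinP.
Qed.

Lemma joint_expect_le_card (e : TX * TY1 * TY2 -> R) (b : R) :
  measurable_fun setT e -> (forall p, (0 <= e p)%R) ->
  (forall y1 y2, \int[PX]_x (e (x, y1, y2))%:E <= b%:E) ->
  joint_expect e <= ((M1 * K)%:R * b)%:E.
Proof.
move=> me e0 hb.
apply: (@le_trans _ _ (\int[PX]_x \sum_(w1 < M1) \sum_(w2 < K)
   \int[g1 w1]_y1 \int[g2 w1 w2]_y2 (e (x, y1, y2))%:E)).
  apply: ge0_le_integralT => x; first exact: (joint_integrand_ge0 e0).
  apply: lee_sum => w1 _; apply: lee_sum => w2 _.
  rewrite -[leRHS]mul1e lee_wpmul2r ?(decoder_integral_ge0 e0) // lee_fin.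
  by rewrite mulr_ile1 ?mulr_ge0 // (le1_of_sum1 _ (hf1 ^~ x), le1_of_sum1 _ (hf2 w1 ^~ x)).
rewrite ge0_integral_sum //; last 2 first.
- by move=> w1; apply: emeasurable_sum => w2; exact: measurable_decoder_integral.
- by move=> w1 x _; apply: sume_ge0 => w2 _; exact: decoder_integral_ge0.
apply: (@le_trans _ _ (\sum_(w1 < M1) \sum_(w2 < K) b%:E)); last first.
  under eq_bigr do rewrite sumEFin sumr_const card_ord.
  by rewrite sumEFin sumr_const card_ord -mulrnA mulr_natl mulnC.
apply: lee_sum => w1 _; rewrite ge0_integral_sum //; last 2 first.
- by move=> w2; exact: measurable_decoder_integral.
- by move=> w2 x _; exact: decoder_integral_ge0.
apply: lee_sum => w2 _.
apply: (@ge0_iterated_integral_le _ _ _ _ _ PX (g1 w1)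
  (fun q => \int[g2 w1 w2]_y2 (e (q, y2))%:E)) => [|q|y1].
- by apply: (measurable_fun_fubini_tonelli_F (fun p => (e p)%:E)) => [|p];
    [exact/measurable_EFinP | rewrite lee_fin].
- by apply: integral_ge0 => y2 _; rewrite lee_fin.
apply: (@ge0_iterated_integral_le _ _ _ _ _ PX (g2 w1 w2)
  (fun q => (e (q.1, y1, q.2))%:E)) => [|q|y2].
- apply/measurable_EFinP/(measurableT_comp me).
  by apply: measurable_fun_pair => //; apply: measurable_fun_pair.
- by rewrite lee_fin.
- exact: hb.
Qed.

Lemma joint_prob_le_add (A B : set (TX * TY1 * TY2)) (e : TX * TY1 * TY2 -> R) c :
  measurable A -> measurable_fun setT e -> (forall p, (0 <= e p)%R) ->
  (forall p, (\1_B p <= \1_A p + e p)%R) -> joint_expect e <= c%:E ->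
  joint_prob PX f1 f2 g1 g2 B - c%:E <= joint_prob PX f1 f2 g1 g2 A.
Proof.
move=> mA me e0 hBA hc; rewrite !joint_probE leeBlDr //.
apply: le_trans (joint_expect_le (h2 := (\1_A \+ e)%R) _ hBA) _ => //.
by rewrite joint_expectD ?leeD //; exact: measurable_indic.
Qed.

Lemma joint_prob_converse_fst (A B : set (TX * TY1 * TY2)) (iota : TX * TY1 -> R) gam :
  (0 < M1)%N -> measurable A -> measurable_fun setT iota ->
  (forall y1, \int[PX]_x (expR (iota (x, y1)))%:E <= 1) ->
  (forall p, B p -> ~ A p -> (ln M1%:R + gam <= iota p.1)%R) ->
  joint_prob PX f1 f2 g1 g2 B - (expR (- gam))%:E <= joint_prob PX f1 f2 g1 g2 A.
Proof.
move=> M1_gt0 mA mi hi hBA; set t := (ln M1%:R + gam)%R.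
have mit : measurable_fun setT (fun q => expR (iota q - t)).
  exact/measurableT_comp/measurable_funB.
apply: (joint_prob_le_add (e := fun p => expR (iota p.1 - t))) => // [|p|].
- exact: measurableT_comp mit measurable_fst.
- exact: (indic_le_indic_add_expR (g := fun q => iota q.1) (hBA p)).
apply: le_trans (joint_expect_fst_le (b := expR (- t)) mit _ _) _ => [q|y1|].
- exact: expR_ge0.
- rewrite integral_expRB; last exact: measurable_fun_pair1.
  by rewrite -[leRHS]mule1 lee_wpmul2l ?lee_fin ?expR_ge0.
- by rewrite lee_fin card_mul_expR_le.
Qed.

Lemma joint_prob_converse (M : nat) (A B : set (TX * TY1 * TY2))
  (iota : TX * TY1 * TY2 -> R) gam :
  (0 < M)%N -> (M1 * K <= M)%N -> measurable A -> measurable_fun setT iota ->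
  (forall y1 y2, \int[PX]_x (expR (iota (x, y1, y2)))%:E <= 1) ->
  (forall p, B p -> ~ A p -> (ln M%:R + gam <= iota p)%R) ->
  joint_prob PX f1 f2 g1 g2 B - (expR (- gam))%:E <= joint_prob PX f1 f2 g1 g2 A.
Proof.
move=> M_gt0 M1K mA mi hi hBA; set t := (ln M%:R + gam)%R.
have mit : measurable_fun setT (fun p => expR (iota p - t)).
  exact/measurableT_comp/measurable_funB.
apply: (joint_prob_le_add (e := fun p => expR (iota p - t))) => // [p|].
- exact: (indic_le_indic_add_expR (g := iota) (hBA p)).
apply: le_trans (joint_expect_le_card (b := expR (- t)) mit _ _) _ => [p|y1 y2|].
- exact: expR_ge0.
- rewrite integral_expRB;
    last exact: (measurable_fun_pair1 y1 (measurable_fun_pair1 y2 mi)).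
  by rewrite -[leRHS]mule1 lee_wpmul2l ?lee_fin ?expR_ge0.
- by rewrite lee_fin card_mul_expR_le.
Qed.

End joint_expectation.

Local Close Scope ereal_scope.

Section excess_distortion_events.
Context (R : realType) (d dy1 dy2 : measure_display)
  (TX : measurableType d) (TY1 : measurableType dy1) (TY2 : measurableType dy2)
  (ds1 : TX * TY1 -> R) (ds2 : TX * TY2 -> R).
Hypotheses (mds1 : measurable_fun setT ds1) (mds2 : measurable_fun setT ds2).

Let mx : measurable_fun setT (fun p : TX * TY1 * TY2 => p.1.1).
Proof. exact: measurableT_comp measurable_fst measurable_fst. Qed.

Let mds1_event : measurable_fun setT (fun p : TX * TY1 * TY2 => ds1 (p.1.1, p.1.2)).
Proof.
apply: measurableT_comp mds1 _; apply: measurable_fun_pair mx _.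
exact: measurableT_comp measurable_snd measurable_fst.
Qed.

Let mds2_event : measurable_fun setT (fun p : TX * TY1 * TY2 => ds2 (p.1.1, p.2)).
Proof. exact: measurableT_comp mds2 (measurable_fun_pair mx measurable_snd). Qed.

Lemma measurable_excess1 dd1 :
  measurable [set p : TX * TY1 * TY2 | ~ (ds1 (p.1.1, p.1.2) <= dd1)].
Proof. exact: measurable_nle mds1_event. Qed.

Lemma measurable_excess2 dd1 dd2 : measurable [set p : TX * TY1 * TY2 |
  ~ (ds1 (p.1.1, p.1.2) <= dd1 /\ ds2 (p.1.1, p.2) <= dd2)].
Proof.
rewrite (_ : [set p | _] = [set p | ~ (ds1 (p.1.1, p.1.2) <= dd1)] `|`
                           [set p | ~ (ds2 (p.1.1, p.2) <= dd2)]).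
  exact: measurableU (measurable_excess1 dd1) (measurable_nle _ mds2_event).
by apply/seteqP; split => p /= /not_andP.
Qed.

End excess_distortion_events.

Section information_densities.
Context (R : realType) (d dy1 dy2 : measure_display)
  (TX : measurableType d) (TY1 : measurableType dy1) (TY2 : measurableType dy2)
  (ds1 : TX * TY1 -> R) (ds2 : TX * TY2 -> R)
  (beta1 : TX -> R) (beta2 : TX * TY1 -> R) (lam1 lam2 nu1 : R).
Hypotheses (hb1 : forall x, 0 < beta1 x) (hb2 : forall q, 0 < beta2 q).

Definition info1 (q : TX * TY1) : R :=
  - (lam1 / (1 + nu1)) * ds1 q + (1 / (1 + nu1) * ln (beta2 q) - ln (beta1 q.1)).

Definition info2 (p : TX * TY1 * TY2) : R :=
  - (lam1 / (1 + nu1)) * ds1 p.1 - lam2 * ds2 (p.1.1, p.2)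
  + (- (nu1 / (1 + nu1)) * ln (beta2 p.1) - ln (beta1 p.1.1)).

Lemma measurable_info1 : measurable_fun setT ds1 -> measurable_fun setT beta1 ->
  measurable_fun setT beta2 -> measurable_fun setT info1.
Proof.
move=> mds1 mb1 mb2; apply: measurable_funD; first exact: measurable_funM.
apply: measurable_funB; first exact/measurable_funM/measurableT_comp.
exact/measurableT_comp/measurableT_comp.
Qed.

Lemma measurable_info2 : measurable_fun setT ds1 -> measurable_fun setT ds2 ->
  measurable_fun setT beta1 -> measurable_fun setT beta2 -> measurable_fun setT info2.
Proof.
move=> mds1 mds2 mb1 mb2.
have mx : measurable_fun setT (fun p : TX * TY1 * TY2 => p.1.1).
  exact: measurableT_comp measurable_fst measurable_fst.
apply: measurable_funD; apply: measurable_funB.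
- exact/measurable_funM/measurableT_comp.
- exact/measurable_funM/measurableT_comp/measurable_fun_pair.
- exact/measurable_funM/measurableT_comp/measurableT_comp.
- exact/measurableT_comp/measurableT_comp.
Qed.

Lemma Sigma1_info1 (PX : probability TX R) y1 :
  Sigma1 PX ds1 beta1 beta2 lam1 nu1 y1 = (\int[PX]_x (expR (info1 (x, y1)))%:E)%E.
Proof.
apply: eq_integral => x _; congr EFin.
rewrite expRD expRB lnK ?posrE // -mulrA /powR gt_eqF //.
Qed.

Lemma Sigma2_info2 (PX : probability TX R) y1 y2 :
  Sigma2 PX ds1 ds2 beta1 beta2 lam1 lam2 nu1 y1 y2
  = (\int[PX]_x (expR (info2 (x, y1, y2)))%:E)%E.
Proof.
apply: eq_integral => x _; congr EFin.
rewrite [in RHS]expRD; congr (_ * _); rewrite mulNr -opprD [_ * ln _ + _]addrC expRN expRD.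
by rewrite lnK ?posrE // /powR gt_eqF.
Qed.

Lemma F1_le_info1 dd1 x y1 : 0 <= lam1 -> 0 <= nu1 -> ds1 (x, y1) <= dd1 ->
  F1 beta1 beta2 lam1 nu1 dd1 x y1 <= info1 (x, y1).
Proof.
move=> lam1_ge0 nu1_ge0 hd.
have : lam1 / (1 + nu1) * ds1 (x, y1) <= lam1 / (1 + nu1) * dd1.
  by rewrite ler_wpM2l // divr_ge0 // addr_ge0.
rewrite /F1 /info1 ln_div ?posrE ?powR_gt0 // ln_powR /= mulNr; lra.
Qed.

Lemma F2_le_info2 dd1 dd2 x y1 y2 : 0 <= lam1 -> 0 <= lam2 -> 0 <= nu1 ->
  ds1 (x, y1) <= dd1 -> ds2 (x, y2) <= dd2 ->
  F2 beta1 beta2 lam1 lam2 nu1 dd1 dd2 x y1 <= info2 (x, y1, y2).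
Proof.
move=> lam1_ge0 lam2_ge0 nu1_ge0 hd1 hd2.
have : lam1 / (1 + nu1) * ds1 (x, y1) <= lam1 / (1 + nu1) * dd1.
  by rewrite ler_wpM2l // divr_ge0 // addr_ge0.
have : lam2 * ds2 (x, y2) <= lam2 * dd2 by rewrite ler_wpM2l.
rewrite /F2 /info2 ln_div ?posrE ?powR_gt0 // ln_powR /= !mulNr; lra.
Qed.

End information_densities.
Theorem mainTheorem5 (R : realType) (d dy1 dy2 : measure_display)
  (TX : measurableType d) (TY1 : measurableType dy1) (TY2 : measurableType dy2)
  (PX : probability TX R)
  (ds1 : TX * TY1 -> R) (ds2 : TX * TY2 -> R)
  (beta1 : TX -> R) (beta2 : TX * TY1 -> R)
  (lam1 lam2 nu1 : R)
  (M1 M2 : nat) (dd1 dd2 eps1 eps2 : R)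
  (f1 : 'I_M1 -> TX -> R) (f2 : 'I_M1 -> 'I_(M2 %/ M1) -> TX -> R)
  (g1 : 'I_M1 -> probability TY1 R) (g2 : 'I_M1 -> 'I_(M2 %/ M1) -> probability TY2 R)
  (hds1m : measurable_fun setT ds1) (hds2m : measurable_fun setT ds2)
  (hds1 : forall p, 0 <= ds1 p) (hds2 : forall p, 0 <= ds2 p)
  (hb1m : measurable_fun setT beta1) (hb2m : measurable_fun setT beta2)
  (hb1 : forall x, 0 < beta1 x) (hb2 : forall p, 0 < beta2 p)
  (hlam1 : 0 <= lam1) (hlam2 : 0 <= lam2) (hnu1 : 0 <= nu1)
  (hS1 : forall y1, (Sigma1 PX ds1 beta1 beta2 lam1 nu1 y1 <= 1)%E)
  (hS2 : forall y1 y2, (Sigma2 PX ds1 ds2 beta1 beta2 lam1 lam2 nu1 y1 y2 <= 1)%E)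
  (* randomized encoders: measurable stochastic kernels into finite sets *)
  (hf1m : forall w1, measurable_fun setT (f1 w1))
  (hf1 : forall w1 x, 0 <= f1 w1 x) (hf1s : forall x, \sum_(w1 < M1) f1 w1 x = 1)
  (hf2m : forall w1 w2, measurable_fun setT (f2 w1 w2))
  (hf2 : forall w1 w2 x, 0 <= f2 w1 w2 x)
  (hf2s : forall w1 x, \sum_(w2 < M2 %/ M1) f2 w1 w2 x = 1)
  (hA1 : (joint_prob PX f1 f2 g1 g2
            [set p : TX * TY1 * TY2 | ~ (ds1 (p.1.1, p.1.2) <= dd1)%R] <= eps1%:E)%E)
  (hA2 : (joint_prob PX f1 f2 g1 g2
            [set p : TX * TY1 * TY2 | ~ ((ds1 (p.1.1, p.1.2) <= dd1)%R /\ (ds2 (p.1.1, p.2) <= dd2)%R)]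
            <= eps2%:E)%E)
  (gam1 gam2 : R) (hg1 : 0 < gam1) (hg2 : 0 < gam2) :
  (eps1%:E >= joint_prob PX f1 f2 g1 g2
       [set p : TX * TY1 * TY2 | (F1 beta1 beta2 lam1 nu1 dd1 p.1.1 p.1.2 >= ln M1%:R + gam1)%R]
     - (expR (- gam1))%:E)%E /\
  (eps2%:E >= joint_prob PX f1 f2 g1 g2
       [set p : TX * TY1 * TY2 | (F2 beta1 beta2 lam1 lam2 nu1 dd1 dd2 p.1.1 p.1.2 >= ln M2%:R + gam2)%R]
     - (expR (- gam2))%:E)%E.
Proof.
have [x0 _] := probability_nonempty PX.
have M1_gt0 := sum1_ord_gt0 (hf1s x0).
have M1K_le : (M1 * (M2 %/ M1) <= M2)%N by rewrite mulnC leq_divM.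
have M2_gt0 : (0 < M2)%N.
  by apply: leq_trans M1K_le; rewrite muln_gt0 M1_gt0 (sum1_ord_gt0 (hf2s (Ordinal M1_gt0) x0)).
split.
- apply: (le_trans _ hA1).
  apply: (joint_prob_converse_fst g1 g2 hf1m hf1 hf1s hf2m hf2 hf2s
    (iota := info1 ds1 beta1 beta2 lam1 nu1)) => //.
  + exact: measurable_excess1.
  + exact: measurable_info1.
  + by move=> y1; rewrite -Sigma1_info1.
  + move=> [[x y1] y2] /= hB hA; apply: (le_trans hB); apply: F1_le_info1 => //.
    exact: contrapT.
- apply: (le_trans _ hA2).
  apply: (joint_prob_converse g1 g2 hf1m hf1 hf1s hf2m hf2 hf2s M2_gt0 M1K_le
    (iota := info2 ds1 ds2 beta1 beta2 lam1 lam2 nu1)) => //.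
  + exact: measurable_excess2.
  + exact: measurable_info2.
  + by move=> y1 y2; rewrite -Sigma2_info2.
  + move=> [[x y1] y2] /= hB /not_andP hA; apply: (le_trans hB).
    by apply: F2_le_info2 => //; apply: contrapT => ?; apply: hA; [left|right].
Qed.
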